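(* Let $E$ be a Banach $f$-algebra with a quasi-interior point $e$, and let $(x_\alpha)_{\alpha\in A}$ be a decreasing net in $E_+$. Then $x_\alpha\xrightarrow{mw}0$ if and only if $x_\alpha(e+u)\to0$ weakly for every $u\in E_+$.
   Context: All vector lattices are real and Archimedean. An $f$-algebra is a vector lattice with an associative multiplication making it an algebra, such that products of positive elements are positive and $x\wedge y=0$ implies $(xz)\wedge y=(zx)\wedge y=0$ for all $z\ge0$. A Banach $f$-algebra is an $f$-algebra which is a Banach lattice with $\|xy\|\le\|x\|\|y\|$. A net $(x_\alpha)$ in $E$ $mw$-converges to $x$ ($x_\alpha\xrightarrow{mw}x$) if $|x_\alpha-x|u\to0$ weakly for every $u\in E_+$. A quasi-interior point is an element $e\in E_+$ such that the ideal generated by $e$ is norm dense in $E$. *)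

From HB Require Import structures.
From mathcomp Require Import all_boot all_order all_algebra.
From mathcomp Require Import all_classical all_reals all_analysis.
Import Order.TTheory GRing.Theory Num.Theory.
Import numFieldNormedType.Exports.
Set Implicit Arguments. Unset Strict Implicit. Unset Printing Implicit Defensive.
Local Open Scope classical_set_scope.
Local Open Scope ring_scope.

Section BanachFAlgebra.
Context {R : realType} {E : completeNormedModType R}.
Variables (le : E -> E -> Prop) (join meet : E -> E -> E) (mul : E -> E -> E).

Record vector_lattice : Prop := {
  vl_refl : forall x, le x x;
  vl_trans : forall x y z, le x y -> le y z -> le x z;
  vl_antisym : forall x y, le x y -> le y x -> x = y;
  vl_add : forall x y z, le x y -> le (x + z) (y + z);
  vl_scale : forall (a : R) x y, 0 <= a -> le x y -> le (a *: x) (a *: y);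
  vl_join_l : forall x y, le x (join x y);
  vl_join_r : forall x y, le y (join x y);
  vl_join_least : forall x y z, le x z -> le y z -> le (join x y) z;
  vl_meet_l : forall x y, le (meet x y) x;
  vl_meet_r : forall x y, le (meet x y) y;
  vl_meet_greatest : forall x y z, le z x -> le z y -> le z (meet x y);
  vl_archimedean : forall x y, (forall n : nat, le (n%:R *: x) y) -> le x 0
}.

Definition vabs (x : E) : E := join x (- x).

Record banach_lattice : Prop := {
  bl_vl : vector_lattice;
  bl_norm : forall x y, le (vabs x) (vabs y) -> `|x| <= `|y|
}.

Record f_algebra : Prop := {
  fa_vl : vector_lattice;
  fa_assoc : forall x y z, mul (mul x y) z = mul x (mul y z);
  fa_addl : forall x y z, mul (x + y) z = mul x z + mul y z;
  fa_addr : forall x y z, mul x (y + z) = mul x y + mul x z;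
  fa_scalel : forall (a : R) x y, mul (a *: x) y = a *: mul x y;
  fa_scaler : forall (a : R) x y, mul x (a *: y) = a *: mul x y;
  fa_pos : forall x y, le 0 x -> le 0 y -> le 0 (mul x y);
  fa_f : forall x y z, meet x y = 0 -> le 0 z ->
           meet (mul x z) y = 0 /\ meet (mul z x) y = 0
}.

Record banach_f_algebra : Prop := {
  bfa_bl : banach_lattice;
  bfa_fa : f_algebra;
  bfa_submult : forall x y, `|mul x y| <= `|x| * `|y|
}.

Definition ideal_gen (e : E) : set E :=
  [set y | exists c : R, le (vabs y) (c *: e)].

Definition quasi_interior (e : E) : Prop :=
  le 0 e /\ closure (ideal_gen e) = setT.

Definition dual_functional (f : E -> R) : Prop :=
  (forall x y, f (x + y) = f x + f y) /\
  (forall (a : R) x, f (a *: x) = a * f x) /\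
  continuous f.

End BanachFAlgebra.

Record directed_set (A : Type) (leA : A -> A -> Prop) : Prop := {
  ds_nonempty : exists a : A, True;
  ds_refl : forall a, leA a a;
  ds_trans : forall a b c, leA a b -> leA b c -> leA a c;
  ds_directed : forall a b, exists c, leA a c /\ leA b c
}.

Definition net_cvg {R : realType} (A : Type) (leA : A -> A -> Prop)
  (g : A -> R) (l : R) : Prop :=
  forall eps : R, 0 < eps -> exists a0, forall a, leA a0 a -> `|g a - l| < eps.

Definition weak_cvg {R : realType} {E : completeNormedModType R}
  (A : Type) (leA : A -> A -> Prop) (x : A -> E) (l : E) : Prop :=
  forall f : E -> R, dual_functional f -> net_cvg leA (fun a => f (x a)) (f l).

Definition mw_cvg {R : realType} {E : completeNormedModType R}
  (le : E -> E -> Prop) (join : E -> E -> E) (mul : E -> E -> E)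
  (A : Type) (leA : A -> A -> Prop) (x : A -> E) (l : E) : Prop :=
  forall u, le 0 u -> weak_cvg leA (fun a => mul (vabs join (x a - l)) u) 0.

From HB Require Import structures.
From mathcomp Require Import all_boot all_order all_algebra.
From mathcomp Require Import all_classical all_reals all_analysis.
From mathcomp Require Import ring.
Import Order.TTheory GRing.Theory Num.Theory.
Import numFieldNormedType.Exports.
Local Open Scope classical_set_scope.
Local Open Scope ring_scope.

(* For a positive net, |x_a| u = x_a u, and x_a u = x_a (e + u) - x_a e;
   weak convergence is preserved by differences, so both conditions say that
   x_a u -> 0 weakly for every u >= 0. *)

Section Nets.
Context {R : realType} {A : Type} {leA : A -> A -> Prop}.

Lemma net_cvg_ext {g h : A -> R} {l : R} :
  (forall a, g a = h a) -> net_cvg leA g l -> net_cvg leA h l.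
Proof.
move=> gh cvg_g eps eps_gt0; have [a0 Ha0] := cvg_g _ eps_gt0.
by exists a0 => a a0a; rewrite -gh; apply: Ha0.
Qed.

Lemma net_cvgB {g h : A -> R} {l m : R} : directed_set leA ->
  net_cvg leA g l -> net_cvg leA h m -> net_cvg leA (fun a => g a - h a) (l - m).
Proof.
move=> HA cvg_g cvg_h eps eps_gt0.
have eps2_gt0 : 0 < eps / 2 by rewrite divr_gt0.
have [a1 Ha1] := cvg_g _ eps2_gt0; have [a2 Ha2] := cvg_h _ eps2_gt0.
have [c [a1c a2c]] := ds_directed HA a1 a2.
exists c => a ca.
have -> : g a - h a - (l - m) = (g a - l) - (h a - m) by ring.
rewrite (splitr eps); apply: le_lt_trans (ler_normB _ _) _.
by rewrite ltrD ?Ha1 ?Ha2 //; apply: ds_trans ca.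
Qed.

End Nets.

Section WeakConvergence.
Context {R : realType} {E : completeNormedModType R}.

Lemma dual_functionalB (f : E -> R) : dual_functional f ->
  forall x y, f (x - y) = f x - f y.
Proof.
move=> [fD [fZ _]] x y.
by rewrite fD -scaleN1r fZ mulN1r.
Qed.

Lemma weak_cvg_ext {A : Type} {leA : A -> A -> Prop} {x y : A -> E} {l : E} :
  (forall a, x a = y a) -> weak_cvg leA x l -> weak_cvg leA y l.
Proof.
by move=> xy cvg_x f hf; apply: (net_cvg_ext _ (cvg_x f hf)) => a; rewrite xy.
Qed.

Lemma weak_cvgB {A : Type} {leA : A -> A -> Prop} {x y : A -> E} {l m : E} :
  directed_set leA -> weak_cvg leA x l -> weak_cvg leA y m ->
  weak_cvg leA (fun a => x a - y a) (l - m).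
Proof.
move=> HA cvg_x cvg_y f hf; rewrite dual_functionalB //.
apply: (net_cvg_ext _ (net_cvgB HA (cvg_x f hf) (cvg_y f hf))) => a.
by rewrite dual_functionalB.
Qed.

End WeakConvergence.

Section PositiveNets.
Context {R : realType} {E : completeNormedModType R}.
Context {le : E -> E -> Prop} {join meet : E -> E -> E}.
Hypothesis VL : vector_lattice le join meet.

Lemma vabs_id (y : E) : le 0 y -> vabs join y = y.
Proof.
move=> y_ge0; have Ny_le_y : le (- y) y.
  apply: (vl_trans VL _ y_ge0).
  by have := vl_add VL (- y) y_ge0; rewrite add0r addrN.
apply: (vl_antisym VL); last exact: (vl_join_l VL y (- y)).
exact: (vl_join_least VL (vl_refl VL y) Ny_le_y).
Qed.

Lemma vl_addr_ge0 {y z : E} : le 0 y -> le 0 z -> le 0 (y + z).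
Proof.
move=> y_ge0 z_ge0; apply: (vl_trans VL (y := z)) => //.
by have := vl_add VL z y_ge0; rewrite add0r.
Qed.

Lemma mw_cvg0_pos (mul : E -> E -> E)
  {A : Type} {leA : A -> A -> Prop} {x : A -> E} :
  (forall a, le 0 (x a)) ->
  mw_cvg le join mul leA x 0 <->
  (forall u, le 0 u -> weak_cvg leA (fun a => mul (x a) u) 0).
Proof.
move=> x_ge0; split=> cvg_x u u_ge0;
  apply: (weak_cvg_ext _ (cvg_x u u_ge0)) => a; by rewrite subr0 vabs_id.
Qed.

End PositiveNets.

Theorem corollary2p12 (R : realType) (E : completeNormedModType R)
  (le : E -> E -> Prop) (join meet mul : E -> E -> E)
  (HE : banach_f_algebra le join meet mul)
  (e : E) (He : quasi_interior le join e)
  (A : Type) (leA : A -> A -> Prop) (HA : directed_set leA)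
  (x : A -> E) (Hpos : forall a, le 0 (x a))
  (Hdec : forall a b, leA a b -> le (x b) (x a)) :
  mw_cvg le join mul leA x 0 <->
  (forall u, le 0 u -> weak_cvg leA (fun a => mul (x a) (e + u)) 0).
Proof.
have FA := bfa_fa HE; have VL := fa_vl FA.
have e_ge0 := He.1.
rewrite (mw_cvg0_pos VL mul Hpos).
split=> cvg_x u u_ge0.
  exact: cvg_x (vl_addr_ge0 VL e_ge0 u_ge0).
have cvg_diff := weak_cvgB HA (cvg_x u u_ge0) (cvg_x 0 (vl_refl VL 0)).
rewrite subr0 in cvg_diff; apply: (weak_cvg_ext _ cvg_diff) => a.
by rewrite addr0 (fa_addr FA) addrAC subrr add0r.
Qed.
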